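(* Let $T$ be a symmetric network (so $T_{ij}=T_{ji}$ for all $i,j$) with $T_{ii}\ge \tfrac12$ for all $i\in N$, let the initial beliefs $x_0\in[0,1]^n$ be fixed, and fix $\epsilon>0$. For $q\in[0,1]$ let $T^*(q)$ be the network induced by confirmation bias $q$. Then the average convergence time $\tau$ of $T^*(q)$ is weakly monotonically increasing in $q$.
   Context: Agents $N=\{1,\dots,n\}$ communicate through a network $T$, an $n\times n$ row-stochastic matrix with entries $T_{ij}\in[0,1]$ ($T_{ij}$ is the weight agent $i$ places on agent $j$'s view; $T_{ii}$ is the self-link). $T$ is assumed strongly connected and aperiodic. Each agent $i$ has an initial belief $x_{i0}\in[0,1]$. Confirmation bias of strength $q\in[0,1]$ produces a network $T^*$ as follows: for $j\neq i$, if $|x_{i0}-x_{j0}|>1-q$ then $T^*_{ij}=0$ and the weight $T_{ij}$ is added to $i$'s self-link; otherwise $T^*_{ij}=T_{ij}$; thus $T^*_{ii}=T_{ii}+\sum_{j\ne i:\,|x_{i0}-x_{j0}|>1-q}T_{ij}$. $T^*$ is assumed strongly connected. Beliefs evolve by $x_t=T^*x_{t-1}$. For a network $P$ with stationary distribution (influence vector) $s$, i.e. the left eigenvector with $sP=s$, $\sum_i s_i=1$, the average convergence time is $\tau=\min\{t>0:\frac1n\sum_i\|P^t(i,\cdot)-s\|_2^2<\epsilon\}$, where $P^t(i,\cdot)$ is the $i$-th row of $P^t$ and $\|\cdot\|_2$ the Euclidean norm. *)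

From mathcomp Require Import all_boot all_order all_algebra.
From mathcomp Require Import reals.
Set Implicit Arguments. Unset Strict Implicit. Unset Printing Implicit Defensive.
Import Order.TTheory GRing.Theory Num.Theory.
Local Open Scope ring_scope.

Fixpoint mxpow (R : realType) (n : nat) (P : 'M[R]_n) (t : nat) : 'M[R]_n :=
  match t with
  | O => 1%:M
  | t'.+1 => P *m mxpow P t'
  end.

Definition row_stochastic (R : realType) (n : nat) (P : 'M[R]_n) : Prop :=
  (forall i j, 0 <= P i j) /\ (forall i, \sum_j P i j = 1).

Definition symmetric_net (R : realType) (n : nat) (P : 'M[R]_n) : Prop :=
  forall i j, P i j = P j i.

Definition strongly_connected (R : realType) (n : nat) (P : 'M[R]_n) : Prop :=
  forall i j, exists k, 0 < mxpow P k i j.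

Definition aperiodic (R : realType) (n : nat) (P : 'M[R]_n) : Prop :=
  forall i (d : nat),
    (forall k : nat, (0 < k)%N -> 0 < mxpow P k i i -> (d %| k)%N) -> d = 1%N.

Definition Tstar (R : realType) (n : nat) (T : 'M[R]_n) (x0 : 'I_n -> R) (q : R)
  : 'M[R]_n :=
  \matrix_(i, j)
    if i == j then
      T i i + \sum_(k | (k != i) && (1 - q < `|x0 i - x0 k|)) T i k
    else if 1 - q < `|x0 i - x0 j| then 0 else T i j.

Definition stationary (R : realType) (n : nat) (P : 'M[R]_n) (s : 'rV[R]_n) : Prop :=
  s *m P = s /\ \sum_j s 0 j = 1 /\ (forall j, 0 <= s 0 j).

Definition avg_dist (R : realType) (n : nat) (P : 'M[R]_n) (s : 'rV[R]_n) (t : nat) : R :=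
  (n%:R)^-1 * \sum_i \sum_j (mxpow P t i j - s 0 j) ^+ 2.

Definition is_conv_time (R : realType) (n : nat) (P : 'M[R]_n) (s : 'rV[R]_n)
  (eps : R) (tau : nat) : Prop :=
  (0 < tau)%N /\ avg_dist P s tau < eps /\
  (forall t : nat, (0 < t)%N -> avg_dist P s t < eps -> (tau <= t)%N).

(* For a symmetric stochastic T* the influence vector is uniform, so the
   average distance at time t is (tr T*^(2t) - 1) / n.  Raising q from q1 to
   q2 adds to T*(q1) the Laplacian of the newly cut links, a nonnegative
   combination of rank-one terms (e_i - e_j)^T (e_i - e_j).  Since T_ii >= 1/2
   makes T*(q1) positive semidefinite, and a positive semidefinite rank-one
   update can only increase the traces of all powers, the average distance
   for q2 dominates the one for q1 at every time.  Convergence for q2 comes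
   from a Doeblin bound on a power of T*(q2) with all entries positive. *)

From mathcomp Require Import all_boot all_order all_algebra.
From mathcomp Require Import reals normedtype sequences.
From mathcomp Require Import ring lra.
Import Order.TTheory GRing.Theory Num.Theory.
Set Implicit Arguments.
Unset Strict Implicit.
Unset Printing Implicit Defensive.
Local Open Scope ring_scope.

Lemma sumr_delta (R : pzSemiRingType) (I : finType) (i : I) (F : I -> R) :
  \sum_j (i == j)%:R * F j = F i.
Proof.
rewrite (bigD1 i) //= eqxx mul1r big1 ?addr0 // => j /negbTE.
by rewrite eq_sym => ->; rewrite mul0r.
Qed.

Section MatrixPowers.

Variables (R : realType) (n : nat).
Implicit Types P : 'M[R]_n.

Lemma mxpowSr P t : mxpow P t.+1 = mxpow P t *m P.
Proof.
elim: t => [|t IH]; first by rewrite /= mulmx1 mul1mx.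
have -> : mxpow P t.+2 = P *m mxpow P t.+1 by [].
by rewrite [in LHS]IH mulmxA.
Qed.

Lemma mxpowD P a b : mxpow P (a + b) = mxpow P a *m mxpow P b.
Proof. by elim: a => [|a IH] /=; rewrite ?mul1mx // IH mulmxA. Qed.

Lemma trmx_mxpow P t : P^T = P -> (mxpow P t)^T = mxpow P t.
Proof.
move=> P_sym; elim: t => [|t IH] /=; first by rewrite trmx1.
by rewrite trmx_mul IH P_sym -mxpowSr.
Qed.

Lemma mxpowSE P t i j : mxpow P t.+1 i j = \sum_l P i l * mxpow P t l j.
Proof. by rewrite mxE. Qed.

Lemma mxpow_ge0 P t : (forall i j, 0 <= P i j) -> forall i j, 0 <= mxpow P t i j.
Proof.
move=> P_ge0; elim: t => [|t IH] i j; first by rewrite mxE ler0n.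
by rewrite mxpowSE; apply: sumr_ge0 => l _; apply: mulr_ge0.
Qed.

Lemma row_stochastic_mxpow P t : row_stochastic P -> row_stochastic (mxpow P t).
Proof.
case=> P_ge0 P_row; split; first exact: mxpow_ge0.
elim: t => [|t IH] i.
  by under eq_bigr do rewrite mxE -[_%:R]mulr1; rewrite sumr_delta.
under eq_bigr do rewrite mxpowSE.
by rewrite exchange_big /=; under eq_bigr do rewrite -mulr_sumr IH mulr1.
Qed.

End MatrixPowers.

Section PositiveEntries.

Variables (R : realType) (n : nat) (P : 'M[R]_n).
Hypothesis P_ge0 : forall i j, 0 <= P i j.

Lemma mxpowS_gt0P t i j :
  0 < mxpow P t.+1 i j -> exists2 l, 0 < P i l & 0 < mxpow P t l j.
Proof.
have Pt_ge0 := mxpow_ge0 t P_ge0.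
rewrite mxpowSE lt0r psumr_neq0 => [/andP[/hasP[l _ /andP[_ Pl_gt0]] _]|l _]; last first.
  exact: mulr_ge0.
move: Pl_gt0 => /gt_eqF/negbT; rewrite mulf_eq0 negb_or => /andP[Pil_neq0 Ptlj_neq0].
by exists l; rewrite lt0r ?Pil_neq0 ?Ptlj_neq0 ?P_ge0 ?Pt_ge0.
Qed.

Hypothesis P_diag_gt0 : forall i, 0 < P i i.

Lemma mxpow_gt0_persist k l i j : 0 < mxpow P k i j -> 0 < mxpow P (k + l) i j.
Proof.
move=> Pk_gt0; elim: l => [|l IH]; first by rewrite addn0.
rewrite addnS mxpowSE (bigD1 i) //=; apply: ltr_wpDr.
  by apply: sumr_ge0 => m _; apply: mulr_ge0 => //; exact: mxpow_ge0.
exact: mulr_gt0.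
Qed.

Lemma strongly_connected_mxpow_gt0 : strongly_connected P ->
  exists2 K, (0 < K)%N & forall i j, 0 < mxpow P K i j.
Proof.
move=> P_sc; pose hit (p : 'I_n * 'I_n) := ex_minn (P_sc p.1 p.2).
exists (\max_p hit p).+1 => // i j.
have hit_le : (hit (i, j) <= (\max_p hit p).+1)%N by apply/leqW/leq_bigmax.
rewrite -(subnKC hit_le); apply: mxpow_gt0_persist.
by rewrite /hit /=; case: ex_minnP.
Qed.

End PositiveEntries.

Section PositiveSemidefinite.

Variables (R : realType) (n : nat).
Implicit Types A : 'M[R]_n.

Definition psd A := forall v : 'rV[R]_n, 0 <= (v *m A *m v^T) 0 0.

Lemma sqr_formE (v : 'rV[R]_n) : (v *m v^T) 0 0 = \sum_i v 0 i ^+ 2.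
Proof. by rewrite mxE; apply: eq_bigr => i _; rewrite mxE expr2. Qed.

Lemma sqr_form_ge0 (v : 'rV[R]_n) : 0 <= (v *m v^T) 0 0.
Proof. by rewrite sqr_formE; apply: sumr_ge0 => i _; rewrite sqr_ge0. Qed.

Lemma psd_mxpow A k : A^T = A -> psd A -> psd (mxpow A k).
Proof.
move=> A_sym A_psd v; set B := mxpow A k./2.
have B_sym : B^T = B by exact: trmx_mxpow.
have AB : A *m B = B *m A by rewrite -mxpowSr.
rewrite -(odd_double_half k) -addnn; case: (odd k); rewrite /= ?add0n mxpowD -/B.
- have -> : v *m (A *m (B *m B)) *m v^T = (v *m B) *m A *m (v *m B)^T.
    by rewrite trmx_mul B_sym (mulmxA A) AB !mulmxA.
  exact: A_psd.
- have -> : v *m (B *m B) *m v^T = (v *m B) *m (v *m B)^T.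
    by rewrite trmx_mul B_sym !mulmxA.
  exact: sqr_form_ge0.
Qed.

End PositiveSemidefinite.

Section RankOneUpdate.

Variables (R : realType) (n : nat) (A : 'M[R]_n) (u : 'rV[R]_n) (w : R).
Hypotheses (A_sym : A^T = A) (A_psd : psd A) (w_ge0 : 0 <= w).

Let C := A + w *: (u^T *m u).

Lemma rank1_update_sym : C^T = C.
Proof. by rewrite /C linearD linearZ /= trmx_mul trmxK A_sym. Qed.

Lemma rank1_update_psd : psd C.
Proof.
move=> v; rewrite /C mulmxDr mulmxDl mxE.
apply: addr_ge0; first exact: A_psd.
rewrite -scalemxAr -scalemxAl mxE; apply: mulr_ge0 => //.
have -> : v *m (u^T *m u) *m v^T = (v *m u^T) *m (v *m u^T)^T.
  by rewrite trmx_mul trmxK !mulmxA.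
exact: sqr_form_ge0.
Qed.

(* Expanding C = A + w u^T u turns the form into a sum of products of the
   nonnegative forms u A^c u^T. *)
Lemma rank1_update_form_ge0 b a : 0 <= (u *m mxpow A a *m mxpow C b *m u^T) 0 0.
Proof.
elim: b a => [|b IH] a; first by rewrite mulmx1; exact: psd_mxpow.
have -> : u *m mxpow A a *m mxpow C b.+1 *m u^T =
    u *m mxpow A a.+1 *m mxpow C b *m u^T
    + w *: ((u *m mxpow A a *m u^T) *m (u *m mxpow C b *m u^T)).
  rewrite [mxpow C b.+1]/= /C mulmxDl mulmxDr mulmxDl mxpowSr -!mulmxA.
  by congr (_ + _); rewrite -!scalemxAl -!scalemxAr !mulmxA.
rewrite mxE [X in _ + X]mxE [X in w * X]mxE big_ord1.
apply: addr_ge0; first exact: IH.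
apply: mulr_ge0 => //; apply: mulr_ge0; first exact: psd_mxpow.
by have := IH 0%N; rewrite mulmx1.
Qed.

Lemma mxtrace_mxpow_rank1_update k : \tr (mxpow A k) <= \tr (mxpow C k).
Proof.
suff le_mixed m : \tr (mxpow A (m + k)) <= \tr (mxpow A m *m mxpow C k).
  by have := le_mixed 0%N; rewrite mul1mx.
elim: k m => [|k IH] m; first by rewrite addn0 mulmx1.
rewrite mxpowSr /C !mulmxDr mxtraceD -[X in X <= _]addr0; apply: lerD.
  by rewrite mulmxA mxtrace_mulC mulmxA -addSnnS; exact: IH.
rewrite -!scalemxAr mxtraceZ !mulmxA mxtrace_mulC trace_mx11 !mulmxA.
by apply: mulr_ge0 => //; exact: rank1_update_form_ge0.
Qed.

End RankOneUpdate.

Lemma mxtrace_mxpow_le_rank1_sum (R : realType) (n : nat) (I : Type) (r : seq I)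
    (w : I -> R) (u : I -> 'rV[R]_n) (A : 'M[R]_n) k :
  (forall i, 0 <= w i) -> A^T = A -> psd A ->
  \tr (mxpow A k) <= \tr (mxpow (A + \sum_(i <- r) w i *: ((u i)^T *m u i)) k).
Proof.
move=> w_ge0; elim: r A => [|x r IH] A A_sym A_psd; first by rewrite big_nil addr0.
rewrite big_cons addrA.
apply: le_trans (mxtrace_mxpow_rank1_update (u x) A_sym A_psd (w_ge0 x) k) _.
by apply: IH; [exact: rank1_update_sym | exact: rank1_update_psd].
Qed.

Section Laplacian.

Variables (R : realType) (n : nat).
Implicit Types W : 'M[R]_n.

Definition laplacian W : 'M[R]_n :=
  \matrix_(i, j) ((i == j)%:R * \sum_k W i k - W i j).

Lemma laplacian_rank1_sum W : symmetric_net W ->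
  laplacian W = \sum_(p : 'I_n * 'I_n)
    (W p.1 p.2 / 2) *: (('e_p.1 - 'e_p.2 : 'rV[R]_n)^T *m ('e_p.1 - 'e_p.2)).
Proof.
move=> W_sym; apply/matrixP => i j; rewrite summxE -(pair_bigA _ (fun a b =>
  ((W a b / 2) *: (('e_a - 'e_b : 'rV[R]_n)^T *m ('e_a - 'e_b))) i j)) /=.
set d := fun a b : 'I_n => (a == b)%:R : R.
set c := fun a b : 'I_n => W a b / 2.
have expand a b :
  ((W a b / 2) *: (('e_a - 'e_b : 'rV[R]_n)^T *m ('e_a - 'e_b))) i j
    = d i a * (d j a * c a b) + d i b * (d j b * c a b)
      - d i a * (d j b * c a b) - d j a * (d i b * c a b).
  by rewrite !mxE big_ord1 !mxE /d /c /=; ring.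
rewrite (eq_bigr _ (fun a _ => eq_bigr _ (fun b _ => expand a b))).
under eq_bigr do rewrite !sumrB big_split /=.
rewrite !sumrB big_split /=.
have -> : \sum_a \sum_b d i a * (d j a * c a b) = d j i * \sum_b c i b.
  by under eq_bigr do rewrite -!mulr_sumr; rewrite sumr_delta.
have -> : \sum_a \sum_b d i b * (d j b * c a b) = d j i * \sum_a c a i.
  by under eq_bigr do rewrite sumr_delta; rewrite -mulr_sumr.
have -> : \sum_a \sum_b d i a * (d j b * c a b) = c i j.
  by under eq_bigr do rewrite -mulr_sumr sumr_delta; rewrite sumr_delta.
have -> : \sum_a \sum_b d j a * (d i b * c a b) = c j i.
  by under eq_bigr do rewrite -mulr_sumr sumr_delta; rewrite sumr_delta.
have c_sym a b : c a b = c b a by rewrite /c W_sym.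
under [\sum_a c a i]eq_bigr do rewrite c_sym.
rewrite (c_sym j i) /c /d -mulr_suml eq_sym mxE.
by move: (_ %:R) (\sum_k W i k) (W i j) => e s x; field.
Qed.

Lemma mxtrace_mxpow_le_laplacian (A W : 'M[R]_n) k :
  A^T = A -> psd A -> symmetric_net W -> (forall i j, 0 <= W i j) ->
  \tr (mxpow A k) <= \tr (mxpow (A + laplacian W) k).
Proof.
move=> A_sym A_psd W_sym W_ge0; rewrite laplacian_rank1_sum //.
by apply: mxtrace_mxpow_le_rank1_sum => // p; rewrite divr_ge0.
Qed.

End Laplacian.

Lemma stationary_dim_gt0 (R : realType) (n : nat) (P : 'M[R]_n) (s : 'rV[R]_n) :
  stationary P s -> (0 < n)%N.
Proof.
case=> _ [+ _]; case: n P s => // P s; rewrite big_ord0 => /eqP.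
by rewrite eq_sym oner_eq0.
Qed.

Lemma symmetric_net_trmx (R : realType) (n : nat) (P : 'M[R]_n) :
  symmetric_net P -> P^T = P.
Proof. by move=> P_sym; apply/matrixP => i j; rewrite mxE P_sym. Qed.

Lemma symmetric_col_sum (R : realType) (n : nat) (P : 'M[R]_n) :
  symmetric_net P -> row_stochastic P -> forall j, \sum_i P i j = 1.
Proof. by move=> P_sym [_ P_row] j; under eq_bigr do rewrite P_sym. Qed.

Section SymmetricStochastic.

Variables (R : realType) (n : nat) (P : 'M[R]_n).
Hypotheses (P_sym : symmetric_net P) (P_st : row_stochastic P).
Implicit Type s : 'rV[R]_n.

Lemma symmetric_net_mxpow t : symmetric_net (mxpow P t).
Proof.
by move=> i j; rewrite -[in LHS](trmx_mxpow t (symmetric_net_trmx P_sym)) mxE.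
Qed.

Lemma quad_formE (v : 'rV[R]_n) :
  (v *m P *m v^T) 0 0 = \sum_i \sum_j v 0 i * P i j * v 0 j.
Proof.
rewrite mxE; under eq_bigr do rewrite !mxE mulr_suml.
by rewrite exchange_big.
Qed.

Lemma sum_weighted_sqr (v : 'rV[R]_n) (e : R) :
  \sum_i \sum_j P i j * (v 0 i + e * v 0 j) ^+ 2 =
  (1 + e ^+ 2) * \sum_i v 0 i ^+ 2 + 2 * e * (v *m P *m v^T) 0 0.
Proof.
case: P_st => _ P_row.
transitivity (\sum_i \sum_j P i j * v 0 i ^+ 2 + e ^+ 2 * \sum_i \sum_j P i j * v 0 j ^+ 2
    + 2 * e * \sum_i \sum_j v 0 i * P i j * v 0 j).
  rewrite !mulr_sumr -!big_split /=; apply: eq_bigr => i _.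
  rewrite !mulr_sumr -!big_split /=; apply: eq_bigr => j _; ring.
rewrite quad_formE [(1 + _) * _]mulrDl mul1r; congr (_ + _ * _ + _).
  by apply: eq_bigr => i _; rewrite -mulr_suml P_row mul1r.
rewrite exchange_big; apply: eq_bigr => j _; rewrite -mulr_suml.
by rewrite symmetric_col_sum ?mul1r.
Qed.

Lemma lazy_symmetric_psd : (forall i, 2^-1 <= P i i) -> psd P.
Proof.
move=> P_diag v; have [P_ge0 _] := P_st.
have := sum_weighted_sqr v 1; rewrite expr1n mulr1.
set S := \sum_i v 0 i ^+ 2.
have diag_le : 2 * S <= \sum_i \sum_j P i j * (v 0 i + 1 * v 0 j) ^+ 2.
  rewrite /S mulr_sumr; apply: ler_sum => i _; rewrite (bigD1 i) //= mul1r.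
  apply: le_trans (_ : P i i * (v 0 i + v 0 i) ^+ 2 <= _).
    by have := P_diag i; have := sqr_ge0 (v 0 i); nra.
  by rewrite lerDl; apply: sumr_ge0 => j _; rewrite mulr_ge0 ?sqr_ge0.
lra.
Qed.

(* The Dirichlet energy \sum_(i,k) P i k (s_i - s_k)^2 of a fixed point s vanishes. *)
Lemma fixed_point_eq_on_edges s i k : s *m P = s -> 0 < P i k -> s 0 i = s 0 k.
Proof.
move=> s_fix Pik_gt0; have [P_ge0 _] := P_st.
have term_ge0 a b : 0 <= P a b * (s 0 a + (-1) * s 0 b) ^+ 2.
  by rewrite mulr_ge0 ?sqr_ge0.
have energy0 : \sum_a \sum_b P a b * (s 0 a + (-1) * s 0 b) ^+ 2 = 0.
  by rewrite sum_weighted_sqr s_fix sqr_formE sqrrN expr1n; lra.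
have := psumr_eq0P (fun a _ => sumr_ge0 _ (fun b _ => term_ge0 a b)) energy0.
move=> /(_ i isT) row_i; have := psumr_eq0P (fun b _ => term_ge0 i b) row_i.
by move=> /(_ k isT)/eqP; rewrite mulf_eq0 (gt_eqF Pik_gt0) sqrf_eq0 mulN1r subr_eq0 => /eqP.
Qed.

Lemma symmetric_stationary_uniform s : strongly_connected P -> stationary P s ->
  forall j, s 0 j = n%:R^-1.
Proof.
move=> P_sc [s_fix [s_sum _]] j; have [P_ge0 _] := P_st.
have path k i : 0 < mxpow P k i j -> s 0 i = s 0 j.
  elim: k i => [|k IH] i; first by rewrite mxE ltr0n lt0b => /eqP ->.
  by case/mxpowS_gt0P => // l /(fixed_point_eq_on_edges s_fix) -> /IH.
have s_const i : s 0 i = s 0 j by have [k] := P_sc i j; exact: path.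
have n_neq0 : n%:R != 0 :> R by rewrite pnatr_eq0 -lt0n (leq_ltn_trans (leq0n j)).
move: s_sum; under eq_bigr do rewrite s_const.
rewrite sumr_const card_ord => sj_n.
by apply: (mulfI n_neq0); rewrite mulfV // mulr_natl.
Qed.

Lemma avg_dist_trace s t : (0 < n)%N -> (forall j, s 0 j = n%:R^-1) ->
  avg_dist P s t = n%:R^-1 * (\tr (mxpow P (t + t)) - 1).
Proof.
move=> n_gt0 s_unif; have n_neq0 : n%:R != 0 :> R by rewrite pnatr_eq0 -lt0n.
have [_ Pt_row] := row_stochastic_mxpow t P_st.
set c := n%:R^-1; set X := mxpow P t.
have row_dist i : \sum_j (X i j - s 0 j) ^+ 2 = \sum_j X i j ^+ 2 + (n%:R * c ^+ 2 - 2 * c).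
  transitivity (\sum_j (X i j ^+ 2 + (c ^+ 2 - 2 * c * X i j))).
    by apply: eq_bigr => j _; rewrite s_unif -/c; ring.
  rewrite big_split /= sumrB sumr_const card_ord -mulr_sumr Pt_row mulr1.
  by rewrite !mulr_natl.
have -> : \tr (mxpow P (t + t)) = \sum_i \sum_j X i j ^+ 2.
  rewrite mxpowD; apply: eq_bigr => i _; rewrite mxE; apply: eq_bigr => j _.
  by rewrite [X j i]symmetric_net_mxpow expr2.
rewrite /avg_dist; under eq_bigr do rewrite row_dist.
by rewrite big_split /= sumr_const card_ord -mulr_natl /c; field.
Qed.

Section Doeblin.

Variables (K : nat) (d : R).
Hypothesis PK_ge : forall i j, d <= mxpow P K i j.

Lemma mxpow_uniform_dev m i j :
  `|mxpow P (K * m) i j - n%:R^-1| <= (1 - n%:R * d) ^+ m.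
Proof.
have n_gt0 : (0 < n)%N := leq_ltn_trans (leq0n i) (ltn_ord i).
have n_neq0 : n%:R != 0 :> R by rewrite pnatr_eq0 -lt0n.
have c_ge0 : 0 <= n%:R^-1 :> R by rewrite invr_ge0 ler0n.
have c_le1 : n%:R^-1 <= 1 :> R by rewrite invf_le1 ?ltr0n // ler1n.
have [_ PK_row] := row_stochastic_mxpow K P_st.
elim: m i j => [|m IH] i j.
  rewrite muln0 mxE expr0; case: eqP => _ /=.
    by rewrite ger0_norm ?subr_ge0 // lerBlDr lerDl.
  by rewrite sub0r normrN ger0_norm.
rewrite mulnS mxpowD mxE; set X := mxpow P (K * m).
have X_col : \sum_l X l j = 1.
  exact: symmetric_col_sum (symmetric_net_mxpow _) (row_stochastic_mxpow _ P_st) j.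
(* The correction terms cancel since rows of P^K and columns of X sum to 1. *)
have shift : \sum_l mxpow P K i l * X l j - n%:R^-1 =
    \sum_l (mxpow P K i l - d) * (X l j - n%:R^-1).
  under [RHS]eq_bigr do rewrite mulrBl !mulrBr.
  rewrite !sumrB -!mulr_sumr -!mulr_suml PK_row X_col sumr_const card_ord.
  by rewrite -mulr_natr; field.
rewrite shift; apply: le_trans (ler_norm_sum _ _ _) _.
apply: le_trans (_ : \sum_l (mxpow P K i l - d) * (1 - n%:R * d) ^+ m <= _).
  apply: ler_sum => l _; rewrite normrM ger0_norm ?subr_ge0 //.
  by apply: ler_wpM2l; rewrite ?subr_ge0.
by rewrite -mulr_suml sumrB sumr_const card_ord PK_row exprS mulr_natl.
Qed.

End Doeblin.

End SymmetricStochastic.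

Lemma lazy_avg_dist_lt (R : realType) (n : nat) (P : 'M[R]_n) (s : 'rV[R]_n) eps :
  symmetric_net P -> row_stochastic P -> (forall i, 2^-1 <= P i i) ->
  strongly_connected P -> stationary P s -> 0 < eps ->
  exists2 t, (0 < t)%N & avg_dist P s t < eps.
Proof.
move=> P_sym P_st P_diag P_sc s_st eps_gt0.
have n_gt0 := stationary_dim_gt0 s_st.
have [P_ge0 _] := P_st.
have P_diag_gt0 i : 0 < P i i by apply: lt_le_trans (P_diag i); rewrite invr_gt0 ltr0n.
have [K K_gt0 PK_gt0] := strongly_connected_mxpow_gt0 P_ge0 P_diag_gt0 P_sc.
pose d := \big[Num.min/1]_(p : 'I_n * 'I_n) mxpow P K p.1 p.2.
have d_gt0 : 0 < d by apply: lt_bigmin => // p _; exact: PK_gt0.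
have d_le i j : d <= mxpow P K i j by exact: (bigmin_le _ (i, j)).
have dev := mxpow_uniform_dev P_sym P_st d_le.
set g := 1 - n%:R * d in dev.
have g_ge0 : 0 <= g.
  by have := dev 1%N (Ordinal n_gt0) (Ordinal n_gt0); rewrite expr1; apply: le_trans.
have g_lt1 : `|g| < 1 by rewrite ger0_norm // ltrBlDr ltrDl mulr_gt0 // ltr0n.
have [N _ gN_lt] := cvgr_lt _ (cvg_expr g_lt1) _ eps_gt0.
exists (K * N.+1)%N; first by rewrite muln_gt0 K_gt0.
have s_unif := symmetric_stationary_uniform P_sym P_st P_sc s_st.
rewrite (avg_dist_trace P_sym P_st _ n_gt0 s_unif).
rewrite -mulnDr; set m := (N.+1 + N.+1)%N.
have n_neq0 : n%:R != 0 :> R by rewrite pnatr_eq0 -lt0n.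
have -> : \tr (mxpow P (K * m)) - 1 = \sum_i (mxpow P (K * m) i i - n%:R^-1).
  by rewrite sumrB sumr_const card_ord -[n%:R^-1 *+ n]mulr_natr mulVf.
apply: le_lt_trans (gN_lt m (ltnW (leq_addr _ _))).
apply: le_trans (_ : n%:R^-1 * (g ^+ m *+ n) <= _).
  apply: ler_wpM2l; first by rewrite invr_ge0 ler0n.
  apply: le_trans (ler_sum _ (fun i _ => le_trans (ler_norm _) (dev m i i))) _.
  by rewrite sumr_const card_ord.
by rewrite -[g ^+ m *+ n]mulr_natl mulKf.
Qed.

Section ConvergenceTime.

Variables (R : realType) (n : nat) (eps : R).
Implicit Types (P : 'M[R]_n) (s : 'rV[R]_n).

Lemma is_conv_time_exists P s :
  (exists2 t, (0 < t)%N & avg_dist P s t < eps) -> exists tau, is_conv_time P s eps tau.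
Proof.
case=> t t_gt0 t_lt; have ex_t : exists t, (0 < t)%N && (avg_dist P s t < eps).
  by exists t; rewrite t_gt0 t_lt.
case: (ex_minnP ex_t) => tau /andP[tau_gt0 tau_lt] tau_min.
exists tau; split=> //; split=> // t' t'_gt0 t'_lt.
by apply: tau_min; rewrite t'_gt0 t'_lt.
Qed.

Lemma is_conv_time_le P1 s1 P2 s2 tau1 tau2 :
  (forall t, avg_dist P1 s1 t <= avg_dist P2 s2 t) ->
  is_conv_time P1 s1 eps tau1 -> is_conv_time P2 s2 eps tau2 -> (tau1 <= tau2)%N.
Proof.
move=> le12 [_ [_ tau1_min]] [tau2_gt0 [tau2_lt _]].
by apply: tau1_min => //; exact: le_lt_trans (le12 _) tau2_lt.
Qed.

End ConvergenceTime.

Section ConfirmationBias.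

Variables (R : realType) (n : nat) (T : 'M[R]_n) (x0 : 'I_n -> R).
Hypotheses (T_st : row_stochastic T) (T_sym : symmetric_net T).

Lemma Tstar_symmetric q : symmetric_net (Tstar T x0 q).
Proof.
move=> i j; rewrite !mxE; case: (eqVneq i j) => [-> //|ne].
by rewrite distrC T_sym.
Qed.

Lemma Tstar_diag_ge q i : T i i <= Tstar T x0 q i i.
Proof.
by rewrite mxE eqxx lerDl; apply: sumr_ge0 => k _; case: T_st.
Qed.

Lemma Tstar_row_stochastic q : row_stochastic (Tstar T x0 q).
Proof.
case: T_st => T_ge0 T_row; split=> [i j|i].
  rewrite mxE; case: ifP => _; last by case: ifP.
  by apply: addr_ge0 => //; apply: sumr_ge0.
rewrite -[in RHS](T_row i) (bigD1 i) //= [RHS](bigD1 i) //= mxE eqxx -addrA.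
congr (_ + _).
rewrite big_mkcondr -big_split /=; apply: eq_bigr => j j_neq_i.
by rewrite mxE eq_sym (negbTE j_neq_i); case: ifP; rewrite ?addr0 ?add0r.
Qed.

Lemma Tstar_laplacian q1 q2 : q1 <= q2 -> q2 <= 1 ->
  Tstar T x0 q2 = Tstar T x0 q1 + laplacian (\matrix_(i, j)
    if (1 - q2 < `|x0 i - x0 j|) && ~~ (1 - q1 < `|x0 i - x0 j|) then T i j else 0).
Proof.
move=> q12 q2_le1.
have cut_mono i j : 1 - q1 < `|x0 i - x0 j| -> 1 - q2 < `|x0 i - x0 j|.
  by apply: le_lt_trans; lra.
have not_cut_diag i : (1 - q2 < `|x0 i - x0 i|) = false.
  by rewrite subrr normr0 ltNge subr_ge0 q2_le1.
apply/matrixP => i j; rewrite !mxE; case: (eqVneq i j) => [<-|_].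
  rewrite mul1r not_cut_diag subr0 -addrA; congr (_ + _).
  rewrite [X in _ = _ + X](bigD1 i) //= mxE not_cut_diag add0r.
  rewrite !big_mkcondr -big_split /=; apply: eq_bigr => k _; rewrite mxE.
  have := cut_mono i k; case: (1 - q1 < _); case: (1 - q2 < _) => //= cut;
    by rewrite ?addr0 ?add0r //; have := cut isT.
rewrite mul0r sub0r; have := cut_mono i j.
case: (1 - q1 < _); case: (1 - q2 < _) => //= cut;
  by rewrite ?subr0 ?subrr //; have := cut isT.
Qed.

Hypothesis T_lazy : forall i, 2^-1 <= T i i.

Lemma Tstar_lazy q i : 2^-1 <= Tstar T x0 q i i.
Proof. exact: le_trans (T_lazy i) (Tstar_diag_ge q i). Qed.

Lemma Tstar_avg_dist_le q1 q2 s1 s2 t : q1 <= q2 -> q2 <= 1 ->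
  strongly_connected (Tstar T x0 q1) -> strongly_connected (Tstar T x0 q2) ->
  stationary (Tstar T x0 q1) s1 -> stationary (Tstar T x0 q2) s2 ->
  avg_dist (Tstar T x0 q1) s1 t <= avg_dist (Tstar T x0 q2) s2 t.
Proof.
move=> q12 q2_le1 sc1 sc2 st1 st2; have n_gt0 := stationary_dim_gt0 st1.
have [sym1 sym2] := (Tstar_symmetric q1, Tstar_symmetric q2).
have [rs1 rs2] := (Tstar_row_stochastic q1, Tstar_row_stochastic q2).
rewrite (avg_dist_trace sym1 rs1 _ n_gt0 (symmetric_stationary_uniform sym1 rs1 sc1 st1)).
rewrite (avg_dist_trace sym2 rs2 _ n_gt0 (symmetric_stationary_uniform sym2 rs2 sc2 st2)).
rewrite ler_wpM2l ?invr_ge0 ?ler0n // lerB // (Tstar_laplacian q12 q2_le1).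
apply: mxtrace_mxpow_le_laplacian.
- exact: symmetric_net_trmx.
- exact: lazy_symmetric_psd (Tstar_lazy q1).
- by move=> i j; rewrite !mxE distrC T_sym.
- by move=> i j; rewrite mxE; case: ifP => // _; case: T_st.
Qed.

End ConfirmationBias.

Theorem theorem1 (R : realType) (n : nat) (T : 'M[R]_n) (x0 : 'I_n -> R) (eps : R)
  (HTst : row_stochastic T) (HTsym : symmetric_net T)
  (HTsc : strongly_connected T) (HTap : aperiodic T)
  (HTdiag : forall i, 2^-1 <= T i i)
  (Hx0 : forall i, 0 <= x0 i <= 1) (Heps : 0 < eps)
  (q1 q2 : R) (Hq1 : 0 <= q1) (Hq12 : q1 <= q2) (Hq2 : q2 <= 1)
  (Hsc1 : strongly_connected (Tstar T x0 q1))
  (Hsc2 : strongly_connected (Tstar T x0 q2))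
  (s1 s2 : 'rV[R]_n)
  (Hs1 : stationary (Tstar T x0 q1) s1) (Hs2 : stationary (Tstar T x0 q2) s2) :
  exists tau1 tau2 : nat,
    is_conv_time (Tstar T x0 q1) s1 eps tau1 /\
    is_conv_time (Tstar T x0 q2) s2 eps tau2 /\
    (tau1 <= tau2)%N.
Proof.
(* Laziness of T makes each T*(q) aperiodic and positive semidefinite. *)
have dist_le t := Tstar_avg_dist_le HTst HTsym HTdiag t Hq12 Hq2 Hsc1 Hsc2 Hs1 Hs2.
have [tau2 conv2] : exists tau2, is_conv_time (Tstar T x0 q2) s2 eps tau2.
  apply: is_conv_time_exists; apply: lazy_avg_dist_lt Hsc2 Hs2 Heps.
  - exact: Tstar_symmetric.
  - exact: Tstar_row_stochastic.
  - exact: Tstar_lazy.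
have [tau1 conv1] : exists tau1, is_conv_time (Tstar T x0 q1) s1 eps tau1.
  case: conv2 => tau2_gt0 [tau2_lt _].
  by apply: is_conv_time_exists; exists tau2 => //; exact: le_lt_trans (dist_le _) tau2_lt.
by exists tau1, tau2; split=> //; split=> //; exact: is_conv_time_le dist_le conv1 conv2.
Qed.
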